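(* Let $\rho\colon\mathcal{F}\to[\Lambda]^\omega$ with $\mathcal{F}\subseteq[\Omega]^\omega$ be a partition regular function. (1) If $\rho_{\mathsf{BI}}\leq_K\rho$, then $\rho\notin P^-_2(\Lambda)$. If moreover $\rho\in(S_1)$, then $\rho_{\mathsf{BI}}\leq_K\rho$ if and only if $\rho\notin P^-_2(\Lambda)$. (2) If $\omega^2+1\in\mathrm{FinBW}(\rho)$, then $\rho\in P^-_2(\Lambda)$. If moreover $\rho\in(S_2)$, then $\rho\in P^-_2(\Lambda)$ if and only if $\omega^2+1\in\mathrm{FinBW}(\rho)$, where the ordinal $\omega^2+1$ carries the order topology.
   Context: All topological spaces are Hausdorff. An ideal on a nonempty set $X$ is a family $\mathcal{I}\subseteq\mathcal{P}(X)$ with $\emptyset\in\mathcal{I}$, $X\notin\mathcal{I}$, closed under finite unions and subsets, containing all finite subsets; $\mathcal{I}^+=\mathcal{P}(X)\setminus\mathcal{I}$. Partition regular function: $\Lambda,\Omega$ countably infinite, $\mathcal{F}$ a nonempty family of infinite subsets of $\Omega$ with $F\setminus K\in\mathcal{F}$ for $F\in\mathcal{F}$, $K$ finite; $\rho\colon\mathcal{F}\to[\Lambda]^\omega$ is partition regular if (M) $E\subseteq F\Rightarrow\rho(E)\subseteq\rho(F)$; (R) if $F\in\mathcal{F}$ and $\rho(F)=A\cup B$ then some $E\in\mathcal{F}$ has $\rho(E)\subseteq A$ or $\rho(E)\subseteq B$; (S) for every $E\in\mathcal{F}$ there is $F\in\mathcal{F}$, $F\subseteq E$, such that every $a\in\rho(F)$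 satisfies $a\notin\rho(F\setminus K)$ for some finite $K\subseteq\Omega$. $\mathcal{I}_\rho=\{A\subseteq\Lambda:\forall F\in\mathcal{F}\ \rho(F)\not\subseteq A\}$. For an ideal $\mathcal{I}$ on a countable set $\Lambda$, $\rho_{\mathcal{I}}\colon\mathcal{I}^+\to[\Lambda]^\omega$, $\rho_{\mathcal{I}}(A)=A$ (with $\Omega=\Lambda$). $\rho$-convergence and $\mathrm{FinBW}(\rho)$: for $f\colon\Lambda\to X$ and $F\in\mathcal{F}$, $f\restriction\rho(F)$ $\rho$-converges to $x$ if for every neighborhood $U$ of $x$ there is a finite $K\subseteq\Omega$ with $f[\rho(F\setminus K)]\subseteq U$; $\mathrm{FinBW}(\rho)$ is the class of spaces $X$ such that for every $f\colon\Lambda\to X$ some $F\in\mathcal{F}$ makes $f\restriction\rho(F)$ $\rho$-convergent to some point of $X$. Katětov order: $\rho_2\leq_K\rho_1$ (for $\rho_i\colon\mathcal{F}_i\to[\Lambda_i]^\omega$, $\mathcal{F}_i\subseteq[\Omega_i]^\omega$) if there is $f\colon\Lambda_1\to\Lambda_2$ such that for every $F_1\in\mathcal{F}_1$ there is $F_2\in\mathcal{F}_2$ such that for every finite $K_1\subseteq\Omega_1$ there is a finite $K_2\subseteq\Omega_2$ with $\rho_2(F_2\setminus K_2)\subseteq f[\rho_1(F_1\setminus K_1)]$. $\mathrm{FIN}^2$ on $\omega^2$: $A\in\mathrm{FIN}^2$ iff there is $i_0$ with $\{j:(i,j)\in A\}$ finite for all $i\ge i_0$. $\mathsf{BI}$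 is the ideal on $\omega^3$: $A\in\mathsf{BI}$ iff there is $i_0$ such that $\{(j,k):(i,j,k)\in A\}\in\mathrm{FIN}^2$ for all $i<i_0$ and $\{(j,k):(i,j,k)\in A\}$ is finite for all $i\geq i_0$. $\rho\in P^-_2(\Lambda)$ means: for every partition $\{A_{i,j}:i,j\in\omega\}$ of $\Lambda$ with all $A_{i,j}\in\mathcal{I}_\rho$ there is $F\in\mathcal{F}$ such that (a) for all $i,j$ there is a finite $K\subseteq\Omega$ with $\rho(F\setminus K)\cap A_{i,j}=\emptyset$, and (b) there is $i_0$ such that for all $i>i_0$ there is a finite $K\subseteq\Omega$ with $\rho(F\setminus K)\cap\bigcup_{j}A_{i,j}=\emptyset$. $\rho\in(S_1)$: for every $E\in\mathcal{F}$ there is $F\in\mathcal{F}$, $F\subseteq E$, such that for every $A\in\mathcal{I}_\rho$ there is $G\in\mathcal{F}$ with $\rho(G)\subseteq\rho(F)\setminus A$ and for every finite $K$ there is a finite $L$ with $\rho(G\setminus L)\subseteq\rho(F\setminus K)$. $\rho\in(S_2)$: for every $E\in\mathcal{F}$ there is $F\in\mathcal{F}$, $F\subseteq E$, such that for every $B\subseteq\rho(F)$ with $B\notin\mathcal{I}_\rho$ there is $G\in\mathcal{F}$ with $\rho(G)\subseteq B$ and for every finite $K$ there is a finite $L$ with $\rho(G\setminus L)\subseteq\rho(F\setminus K)$. *)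

From Stdlib Require Import List Arith.
Import ListNotations.

Definition finite {A : Type} (K : A -> Prop) : Prop :=
  exists l : list A, forall x, K x -> In x l.

Definition infinite {A : Type} (K : A -> Prop) : Prop := ~ finite K.

Definition countably_infinite (T : Type) : Prop :=
  exists e : nat -> T, (forall m n, e m = e n -> m = n) /\ (forall t, exists n, e n = t).

Definition subset {A : Type} (X Y : A -> Prop) : Prop := forall x, X x -> Y x.

Definition setminus {A : Type} (X K : A -> Prop) : A -> Prop := fun x => X x /\ ~ K x.

Definition image {A B : Type} (f : A -> B) (X : A -> Prop) : B -> Prop :=
  fun y => exists x, X x /\ f x = y.

Definition disjoint {A : Type} (X Y : A -> Prop) : Prop := forall x, X x -> Y x -> False.

Definition partition_regular {Lam Om : Type}
  (Fam : (Om -> Prop) -> Prop) (rho : (Om -> Prop) -> (Lam -> Prop)) : Prop :=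
  countably_infinite Lam /\ countably_infinite Om /\
  (exists F, Fam F) /\
  (forall F, Fam F -> infinite F) /\
  (forall F K, Fam F -> finite K -> Fam (setminus F K)) /\
  (forall F, Fam F -> infinite (rho F)) /\
  (forall E F, Fam E -> Fam F -> subset E F -> subset (rho E) (rho F)) /\
  (forall F (A B : Lam -> Prop), Fam F ->
     (forall l, rho F l <-> (A l \/ B l)) ->
     exists E, Fam E /\ (subset (rho E) A \/ subset (rho E) B)) /\
  (* (S) *)
  (forall E, Fam E -> exists F, Fam F /\ subset F E /\
     forall a, rho F a -> exists K, finite K /\ ~ rho (setminus F K) a).

Definition I_rho {Lam Om : Type} (Fam : (Om -> Prop) -> Prop)
  (rho : (Om -> Prop) -> (Lam -> Prop)) (A : Lam -> Prop) : Prop :=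
  forall F, Fam F -> ~ subset (rho F) A.

(* Katetov order: rho2 <=_K rho1 *)
Definition katetov_le {Lam1 Om1 Lam2 Om2 : Type}
  (Fam2 : (Om2 -> Prop) -> Prop) (rho2 : (Om2 -> Prop) -> (Lam2 -> Prop))
  (Fam1 : (Om1 -> Prop) -> Prop) (rho1 : (Om1 -> Prop) -> (Lam1 -> Prop)) : Prop :=
  exists f : Lam1 -> Lam2,
    forall F1, Fam1 F1 -> exists F2, Fam2 F2 /\
      forall K1, finite K1 -> exists K2, finite K2 /\
        subset (rho2 (setminus F2 K2)) (image f (rho1 (setminus F1 K1))).

Definition FIN2 (A : nat * nat -> Prop) : Prop :=
  exists i0, forall i, i0 <= i -> finite (fun j => A (i, j)).

Definition BI (A : nat * (nat * nat) -> Prop) : Prop :=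
  exists i0, forall i,
    (i < i0 -> FIN2 (fun p => A (i, p))) /\
    (i0 <= i -> finite (fun p => A (i, p))).

(* rho_I : I^+ -> [Lambda]^omega, rho_I(A) = A *)
Definition Fam_ideal {L : Type} (I : (L -> Prop) -> Prop) : (L -> Prop) -> Prop :=
  fun A => ~ I A.
Definition rho_ideal {L : Type} (A : L -> Prop) : L -> Prop := A.

Definition rho_BI_le_K {Lam Om : Type} (Fam : (Om -> Prop) -> Prop)
  (rho : (Om -> Prop) -> (Lam -> Prop)) : Prop :=
  katetov_le (Fam_ideal BI) (@rho_ideal (nat * (nat * nat))) Fam rho.

Definition P2minus {Lam Om : Type} (Fam : (Om -> Prop) -> Prop)
  (rho : (Om -> Prop) -> (Lam -> Prop)) : Prop :=
  forall A : nat -> nat -> Lam -> Prop,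
    (forall l, exists i j, A i j l) ->
    (forall i j i' j', (i, j) <> (i', j') -> disjoint (A i j) (A i' j')) ->
    (forall i j, I_rho Fam rho (A i j)) ->
    exists F, Fam F /\
      (forall i j, exists K, finite K /\ disjoint (rho (setminus F K)) (A i j)) /\
      (exists i0, forall i, i0 < i -> exists K, finite K /\
         disjoint (rho (setminus F K)) (fun l => exists j, A i j l)).

Definition S1 {Lam Om : Type} (Fam : (Om -> Prop) -> Prop)
  (rho : (Om -> Prop) -> (Lam -> Prop)) : Prop :=
  forall E, Fam E -> exists F, Fam F /\ subset F E /\
    forall A, I_rho Fam rho A -> exists G, Fam G /\
      subset (rho G) (setminus (rho F) A) /\
      forall K, finite K -> exists L, finite L /\
        subset (rho (setminus G L)) (rho (setminus F K)).

Definition S2 {Lam Om : Type} (Fam : (Om -> Prop) -> Prop)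
  (rho : (Om -> Prop) -> (Lam -> Prop)) : Prop :=
  forall E, Fam E -> exists F, Fam F /\ subset F E /\
    forall B, subset B (rho F) -> ~ I_rho Fam rho B -> exists G, Fam G /\
      subset (rho G) B /\
      forall K, finite K -> exists L, finite L /\
        subset (rho (setminus G L)) (rho (setminus F K)).

(* FinBW(rho) membership of a space X given by its neighbourhood relation *)
Definition FinBW {Lam Om X : Type} (nbhd : X -> (X -> Prop) -> Prop)
  (Fam : (Om -> Prop) -> Prop) (rho : (Om -> Prop) -> (Lam -> Prop)) : Prop :=
  forall f : Lam -> X, exists F, Fam F /\ exists x,
    forall U, nbhd x U -> exists K, finite K /\ subset (image f (rho (setminus F K))) U.

(* The ordinal omega^2 + 1: Some (i,j) stands for omega*i + j, None for omega^2 *)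
Definition ord_w2_1 : Type := option (nat * nat).

Definition ord_lt (x y : ord_w2_1) : Prop :=
  match x, y with
  | Some (i, j), Some (i', j') => i < i' \/ (i = i' /\ j < j')
  | Some _, None => True
  | None, _ => False
  end.

(* Order topology: U is a neighbourhood of x iff it contains a basic open set
   (an open interval, an open ray, or the whole space) containing x;
   [None] as an endpoint means "unbounded". *)
Definition ord_nbhd (x : ord_w2_1) (U : ord_w2_1 -> Prop) : Prop :=
  exists lo hi : option ord_w2_1,
    (forall a, lo = Some a -> ord_lt a x) /\
    (forall b, hi = Some b -> ord_lt x b) /\
    forall y, (forall a, lo = Some a -> ord_lt a y) ->
              (forall b, hi = Some b -> ord_lt y b) -> U y.

(* (1) A Katětov reduction f of rho_BI to rho pulls the columns {i} x {j} x omega of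
   omega^3 back to a partition of Lambda into sets of I_rho.  A P^-_2 witness F for
   that partition would be pushed by f to a BI-positive set meeting every column and
   almost every row of omega^3 in a finite set, which is impossible.  Conversely, let
   (A_ij) witness rho ∉ P^-_2 and let F be given by (S) and (S_1).  Since discarding
   finitely many A_ij from rho(F) never produces a witness, either infinitely many
   rows, or infinitely many pieces of a single row, meet every tail of F.  Choosing,
   along an enumeration of Omega, points of these sets deeper and deeper in the tails
   of F and mapping them by l |-> (i, j, code l) gives a BI-positive set witnessing
   the reduction.
   (2) Send A_ij to the isolated ordinal omega*i + j + 1.  A rho-limit of this map
   cannot be isolated because A_ij ∈ I_rho; a limit point omega*i or omega^2 has
   neighbourhoods missing any given value and every row beyond i, so a set on which
   the map rho-converges is a P^-_2 witness.  Conversely, given f : Lambda -> omega^2+1,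
   apply P^-_2 to the fibres of f and then (S_2): some G lands inside one row i, where
   f rho-converges to omega*(i+1), or inside the rows beyond i_0 and the top point,
   where f rho-converges to omega^2. *)

From Stdlib Require Import List Arith Lia Classical ClassicalEpsilon.
Import ListNotations.

Lemma finite_empty {A : Type} : finite (fun _ : A => False).
Proof. exists []. intros x []. Qed.

Lemma finite_sub {A : Type} (X Y : A -> Prop) : subset X Y -> finite Y -> finite X.
Proof. intros HXY [l Hl]. exists l. intros x Hx. apply Hl, HXY, Hx. Qed.

Lemma finite_union {A : Type} (X Y : A -> Prop) :
  finite X -> finite Y -> finite (fun x => X x \/ Y x).
Proof.
  intros [l1 H1] [l2 H2]. exists (l1 ++ l2).
  intros x [Hx|Hx]; apply in_or_app; auto.
Qed.

Lemma finite_image {A B : Type} (f : A -> B) (X : A -> Prop) :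
  finite X -> finite (image f X).
Proof. intros [l Hl]. exists (map f l). intros y [x [Hx <-]]. apply in_map, Hl, Hx. Qed.

Lemma finite_preimage {A B : Type} (g : A -> B) (h : B -> A) (X : B -> Prop) :
  (forall a, h (g a) = a) -> finite X -> finite (fun a => X (g a)).
Proof.
  intros Hgh [l Hl]. exists (map h l). intros a Ha.
  rewrite <- (Hgh a). apply in_map, Hl, Ha.
Qed.

Lemma infinite_image_inter {A B : Type} (f : A -> B) (h : B -> A)
  (D X : A -> Prop) (Y : B -> Prop) :
  (forall a, h (f a) = a) -> (forall a, X a -> Y (f a)) ->
  infinite (fun a => D a /\ X a) -> infinite (fun b => image f D b /\ Y b).
Proof.
  intros Hfh HXY HDX Hfin. apply HDX.
  apply (finite_sub _ (fun a => image f D (f a) /\ Y (f a))).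
  - intros a [HD HX]. split; [exists a; auto|apply HXY, HX].
  - apply (finite_preimage f h (fun b => image f D b /\ Y b)); auto.
Qed.

Lemma finite_nat_lt (N : nat) : finite (fun n => n < N).
Proof. exists (seq 0 N). intros n Hn. apply in_seq. lia. Qed.

Lemma finite_pairs_lt (N : nat) : finite (fun p : nat * nat => fst p < N /\ snd p < N).
Proof.
  exists (list_prod (seq 0 N) (seq 0 N)). intros [m n] [Hm Hn].
  apply in_prod; apply in_seq; simpl in *; lia.
Qed.

Lemma finite_sub_enum_prefix {A : Type} (e : nat -> A) :
  (forall a, exists n, e n = a) ->
  forall K, finite K -> exists N, subset K (image e (fun n => n < N)).
Proof.
  intros He K [l Hl].
  enough (Hpre : exists N, forall a, In a l -> image e (fun n => n < N) a).
  { destruct Hpre as [N HN]. exists N. intros a Ha. apply HN, Hl, Ha. }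
  clear Hl. induction l as [|a l [N HN]].
  - exists 0. intros a [].
  - destruct (He a) as [k Hk]. exists (max (S k) N). intros b [<-|Hb].
    + exists k. split; [lia|exact Hk].
    + destruct (HN b Hb) as [n [Hn <-]]. exists n. split; [lia|reflexivity].
Qed.

Lemma finite_union_closed {A : Type} (P : (A -> Prop) -> Prop) :
  P (fun _ => False) ->
  (forall X Y, subset X Y -> P Y -> P X) ->
  (forall X Y, P X -> P Y -> P (fun a => X a \/ Y a)) ->
  forall (R : nat -> A -> Prop) n,
    (forall i, i < n -> P (R i)) -> P (fun a => exists i, i < n /\ R i a).
Proof.
  intros Hempty Hsub Hunion R n. induction n as [|n IH]; intros HR.
  - apply (Hsub _ _ (fun a '(ex_intro _ i (conj Hi _)) => Nat.nlt_0_r i Hi) Hempty).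
  - apply (Hsub _ (fun a => (exists i, i < n /\ R i a) \/ R n a)).
    + intros a [i [Hi HRi]]. destruct (Nat.lt_ge_cases i n) as [Hin|Hin].
      * left. exists i. auto.
      * right. replace n with i by lia. exact HRi.
    + apply Hunion; auto.
Qed.

Definition almost_subset {A : Type} (X Y : A -> Prop) : Prop :=
  exists K, finite K /\ subset (setminus X K) Y.

Lemma almost_subset_image {A B : Type} (f : A -> B) (X Y : A -> Prop) :
  almost_subset X Y -> almost_subset (image f X) (image f Y).
Proof.
  intros [K [HK HXY]]. exists (image f K). split; [now apply finite_image|].
  intros b [[a [Ha <-]] HnK]. exists a. split; [|reflexivity].
  apply HXY. split; [exact Ha|]. intro Hk. apply HnK. exists a. auto.
Qed.

Lemma almost_subset_weaken {A : Type} (X Y Z : A -> Prop) :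
  almost_subset X Y -> subset Y Z -> almost_subset X Z.
Proof. intros [K [HK HXY]] HYZ. exists K. split; auto. intros a Ha. apply HYZ, HXY, Ha. Qed.

Lemma partition_index {L : Type} (A : nat -> nat -> L -> Prop) :
  (forall l, exists i j, A i j l) ->
  (forall i j i' j', (i, j) <> (i', j') -> disjoint (A i j) (A i' j')) ->
  exists idx : L -> nat * nat, forall l i j, A i j l <-> idx l = (i, j).
Proof.
  intros Hcov Hdisj.
  destruct (choice (fun l p => A (fst p) (snd p) l)) as [idx Hidx].
  { intro l. destruct (Hcov l) as [i [j H]]. now exists (i, j). }
  exists idx. intros l i j. specialize (Hidx l). split.
  - intro Hl. destruct (idx l) as [a b]. simpl in Hidx.
    apply NNPP. intro Hne. exact (Hdisj a b i j Hne l Hidx Hl).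
  - intros E. rewrite E in Hidx. exact Hidx.
Qed.

Lemma partition_coding {L : Type} (A : nat -> nat -> L -> Prop) :
  countably_infinite L -> (forall l, exists i j, A i j l) ->
  (forall i j i' j', (i, j) <> (i', j') -> disjoint (A i j) (A i' j')) ->
  exists (f : L -> nat * (nat * nat)) (h : nat * (nat * nat) -> L),
    (forall l, h (f l) = l) /\ (forall l i j, A i j l -> fst (f l) = i /\ fst (snd (f l)) = j).
Proof.
  intros [e [_ He]] Hcov Hdisj.
  destruct (choice (fun l n => e n = l) He) as [code Hcode].
  destruct (partition_index A Hcov Hdisj) as [idx Hidx].
  exists (fun l => (fst (idx l), (snd (idx l), code l))), (fun p => e (snd (snd p))).
  split; [exact Hcode|]. intros l i j Hl. apply Hidx in Hl. rewrite Hl. auto.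
Qed.

Lemma not_unbounded (P : nat -> Prop) :
  ~ (forall n, exists i, n <= i /\ ~ P i) -> exists N, forall i, N <= i -> P i.
Proof.
  intro H. apply not_all_ex_not in H as [N HN].
  exists N. intros i Hi. apply NNPP. intro HnP. apply HN. eauto.
Qed.

Lemma uniform_bound (Q : nat -> nat -> Prop) (N : nat) :
  (forall i, exists M, forall j, M <= j -> Q i j) ->
  exists M, forall i j, i < N -> M <= j -> Q i j.
Proof.
  intros HQ. induction N as [|N [M HM]].
  - exists 0. intros i j Hi. lia.
  - destruct (HQ N) as [M' HM']. exists (max M M'). intros i j Hi Hj.
    destruct (Nat.eq_dec i N) as [->|Hne]; [apply HM'|apply HM]; lia.
Qed.

Lemma BI_of_bounds (X : nat * (nat * nat) -> Prop) (i0 j0 : nat) :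
  (forall i j, i < i0 -> j0 <= j -> finite (fun p => X p /\ fst p = i /\ fst (snd p) = j)) ->
  (forall i, i0 <= i -> finite (fun p => X p /\ fst p = i)) ->
  BI X.
Proof.
  intros Hcol Hrow. exists i0. intro i. split.
  - intro Hi. exists j0. intros j Hj.
    eapply finite_sub; [|exact (finite_preimage (fun k => (i, (j, k))) (fun p => snd (snd p)) _
                                   (fun _ => eq_refl) (Hcol i j Hi Hj))].
    intros k Hk. exact (conj Hk (conj eq_refl eq_refl)).
  - intro Hi.
    eapply finite_sub; [|exact (finite_preimage (fun q => (i, q)) snd _
                                   (fun _ => eq_refl) (Hrow i Hi))].
    intros q Hq. exact (conj Hq eq_refl).
Qed.

Lemma not_BI_of_rows (X : nat * (nat * nat) -> Prop) :
  (forall n, exists i, n <= i /\ infinite (fun p => X p /\ fst p = i)) -> ~ BI X.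
Proof.
  intros Hrows [i0 Hi0]. destruct (Hrows i0) as [i [Hi Hinf]]. apply Hinf.
  apply (finite_sub _ (image (fun q => (i, q)) (fun q => X (i, q)))).
  - intros [a q] [HX Ha]. simpl in Ha. subst a. exists q. auto.
  - apply finite_image, (proj2 (Hi0 i) Hi).
Qed.

Lemma not_BI_of_columns (X : nat * (nat * nat) -> Prop) (i : nat) :
  (forall n, exists j, n <= j /\ infinite (fun p => X p /\ fst p = i /\ fst (snd p) = j)) ->
  ~ BI X.
Proof.
  intros Hcols [i0 Hi0]. destruct (Hi0 i) as [Hlow Hhigh].
  destruct (Nat.lt_ge_cases i i0) as [Hi|Hi].
  - destruct (Hlow Hi) as [j0 Hj0]. destruct (Hcols j0) as [j [Hj Hinf]]. apply Hinf.
    apply (finite_sub _ (image (fun k => (i, (j, k))) (fun k => X (i, (j, k))))).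
    + intros [a [b k]] [HX [Ha Hb]]. simpl in *. subst. exists k. auto.
    + apply finite_image, Hj0, Hj.
  - destruct (Hcols 0) as [j [_ Hinf]]. apply Hinf.
    apply (finite_sub _ (image (fun q => (i, q)) (fun q => X (i, q)))).
    + intros [a q] [HX [Ha _]]. simpl in Ha. subst a. exists q. auto.
    + apply finite_image, Hhigh, Hi.
Qed.

Lemma ord_lt_irrefl (x : ord_w2_1) : ~ ord_lt x x.
Proof. destruct x as [[a b]|]; simpl; lia. Qed.

Lemma ord_lt_total (x y : ord_w2_1) : x = y \/ ord_lt x y \/ ord_lt y x.
Proof.
  destruct x as [[a b]|], y as [[c d]|]; simpl; auto.
  destruct (Nat.lt_trichotomy a c) as [H|[<-|H]]; auto.
  destruct (Nat.lt_trichotomy b d) as [H|[<-|H]]; auto.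
Qed.

Lemma ord_nbhd_interval (a b x : ord_w2_1) (U : ord_w2_1 -> Prop) :
  ord_lt a x -> ord_lt x b -> (forall y, ord_lt a y -> ord_lt y b -> U y) -> ord_nbhd x U.
Proof.
  intros Ha Hb HU. exists (Some a), (Some b).
  split; [|split]; [intros ? [= <-]; exact Ha|intros ? [= <-]; exact Hb|].
  intros y Hay Hyb. apply HU; [apply Hay|apply Hyb]; reflexivity.
Qed.

Lemma ord_nbhd_above (a x : ord_w2_1) (U : ord_w2_1 -> Prop) :
  ord_lt a x -> (forall y, ord_lt a y -> U y) -> ord_nbhd x U.
Proof.
  intros Ha HU. exists (Some a), None.
  split; [|split]; [intros ? [= <-]; exact Ha|discriminate|].
  intros y Hay _. apply HU, Hay. reflexivity.
Qed.

Lemma ord_nbhd_below (b x : ord_w2_1) (U : ord_w2_1 -> Prop) :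
  ord_lt x b -> (forall y, ord_lt y b -> U y) -> ord_nbhd x U.
Proof.
  intros Hb HU. exists None, (Some b).
  split; [|split]; [discriminate|intros ? [= <-]; exact Hb|].
  intros y _ Hyb. apply HU, Hyb. reflexivity.
Qed.

Lemma ord_nbhd_self (x : ord_w2_1) (U : ord_w2_1 -> Prop) : ord_nbhd x U -> U x.
Proof. intros [lo [hi [Hlo [Hhi HU]]]]. exact (HU x Hlo Hhi). Qed.

Lemma ord_nbhd_isolated (i j : nat) :
  ord_nbhd (Some (i, S j)) (fun y => y = Some (i, S j)).
Proof.
  apply (ord_nbhd_interval (Some (i, j)) (Some (i, S (S j)))); simpl; try lia.
  intros [[a b]|] Ha Hb; simpl in *; [|contradiction].
  f_equal. f_equal; lia.
Qed.

Lemma ord_nbhd_neq (x y : ord_w2_1) : x <> y -> ord_nbhd x (fun z => z <> y).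
Proof.
  intros Hxy. destruct (ord_lt_total x y) as [Heq|[Hlt|Hgt]]; [contradiction| |].
  - apply (ord_nbhd_below y); auto. intros z Hz ->. exact (ord_lt_irrefl _ Hz).
  - apply (ord_nbhd_above y); auto. intros z Hz ->. exact (ord_lt_irrefl _ Hz).
Qed.

Lemma ord_nbhd_avoid_row (x : ord_w2_1) (i : nat) :
  (forall j, x <> Some (i, j)) -> x <> Some (S i, 0) ->
  ord_nbhd x (fun z => forall j, z <> Some (i, j)).
Proof.
  intros Hrow Hlim. destruct x as [[a b]|].
  - assert (a <> i) by (intros ->; exact (Hrow b eq_refl)).
    assert (a = S i -> b <> 0) by (intros -> ->; exact (Hlim eq_refl)).
    destruct (Nat.lt_ge_cases a i).
    + apply (ord_nbhd_below (Some (i, 0))); simpl; [lia|].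
      intros [[c d]|] Hz j [= -> ->]; simpl in Hz; lia.
    + apply (ord_nbhd_above (Some (S i, 0))); simpl; [lia|].
      intros [[c d]|] Hz j [= -> ->]; simpl in Hz; lia.
  - apply (ord_nbhd_above (Some (S i, 0))); simpl; auto.
    intros [[c d]|] Hz j [= -> ->]; simpl in Hz; lia.
Qed.

Lemma ord_nbhd_limit_row (i : nat) (U : ord_w2_1 -> Prop) :
  ord_nbhd (Some (S i, 0)) U -> exists M, forall j, M <= j -> U (Some (i, j)).
Proof.
  intros [lo [hi [Hlo [Hhi HU]]]].
  assert (Hb : forall b, hi = Some b -> forall j, ord_lt (Some (i, j)) b).
  { intros [[b1 b2]|] Hb j; simpl; auto. specialize (Hhi _ Hb). simpl in Hhi. lia. }
  destruct lo as [[[a1 a2]|]|].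
  - exists (S a2). intros j Hj. apply HU; [|intros b E; apply Hb, E].
    intros a [= <-]. specialize (Hlo _ eq_refl). simpl in *. lia.
  - destruct (Hlo None eq_refl).
  - exists 0. intros j _. apply HU; [discriminate|intros b E; apply Hb, E].
Qed.

Lemma ord_nbhd_top (U : ord_w2_1 -> Prop) :
  ord_nbhd None U -> exists N, forall i j, N < i -> U (Some (i, j)).
Proof.
  intros [lo [hi [Hlo [Hhi HU]]]].
  assert (Hb : forall b, hi = Some b -> forall y, ord_lt y b).
  { intros b Hb. destruct (Hhi b Hb). }
  destruct lo as [[[a1 a2]|]|].
  - exists a1. intros i j Hi. apply HU; [|intros b E; apply Hb, E].
    intros a [= <-]. simpl. lia.
  - destruct (Hlo None eq_refl).
  - exists 0. intros i j _. apply HU; [discriminate|intros b E; apply Hb, E].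
Qed.

Definition ord_of_pair (i j : nat) : ord_w2_1 :=
  match i, j with
  | 0, 0 => None
  | 0, S j => Some (0, j)
  | S i, j => Some (S i, j)
  end.

Lemma ord_of_pair_inj (i j i' j' : nat) :
  ord_of_pair i j = ord_of_pair i' j' -> (i, j) = (i', j').
Proof.
  intros E. destruct i as [|i], j as [|j], i' as [|i'], j' as [|j']; simpl in E; congruence.
Qed.

Lemma ord_of_pair_surj (x : ord_w2_1) : exists i j, ord_of_pair i j = x.
Proof.
  destruct x as [[[|i] j]|]; [exists 0, (S j)|exists (S i), j|exists 0, 0]; reflexivity.
Qed.

Lemma ord_of_pair_pos (i j : nat) : 0 < i -> ord_of_pair i j = Some (i, j).
Proof. destruct i; [lia|reflexivity]. Qed.

Section PartitionRegular.

Context {Lam Om : Type} (Fam : (Om -> Prop) -> Prop) (rho : (Om -> Prop) -> (Lam -> Prop)).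

Hypothesis Lam_countable : countably_infinite Lam.
Hypothesis Om_countable : countably_infinite Om.
Hypothesis Fam_setminus : forall F K, Fam F -> finite K -> Fam (setminus F K).
Hypothesis rho_infinite : forall F, Fam F -> infinite (rho F).
Hypothesis rho_mono : forall E F, Fam E -> Fam F -> subset E F -> subset (rho E) (rho F).
Hypothesis rho_split : forall F (A B : Lam -> Prop), Fam F ->
  (forall l, rho F l <-> (A l \/ B l)) ->
  exists E, Fam E /\ (subset (rho E) A \/ subset (rho E) B).
Hypothesis rho_points_leave : forall E, Fam E -> exists F, Fam F /\ subset F E /\
  forall a, rho F a -> exists K, finite K /\ ~ rho (setminus F K) a.

Lemma rho_tail_sub (F G : Om -> Prop) (K L : Om -> Prop) :
  Fam F -> Fam G -> subset F G -> finite K -> finite L -> subset K L ->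
  subset (rho (setminus F L)) (rho (setminus G K)).
Proof.
  intros HF HG HFG HK HL HKL. apply rho_mono; auto.
  intros o [Ho HnL]. split; auto.
Qed.

Lemma rho_tail_sub_rho (F K : Om -> Prop) :
  Fam F -> finite K -> subset (rho (setminus F K)) (rho F).
Proof. intros HF HK. apply rho_mono; auto. intros o [Ho _]. exact Ho. Qed.

Definition eventually_disjoint (F : Om -> Prop) (X : Lam -> Prop) : Prop :=
  exists K, finite K /\ disjoint (rho (setminus F K)) X.

Definition tails_refine (G F : Om -> Prop) : Prop :=
  forall K, finite K -> exists L, finite L /\ subset (rho (setminus G L)) (rho (setminus F K)).

Lemma eventually_disjoint_sub (F : Om -> Prop) (X Y : Lam -> Prop) :
  subset X Y -> eventually_disjoint F Y -> eventually_disjoint F X.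
Proof.
  intros HXY [K [HK Hd]]. exists K. split; auto.
  intros l Hl HX. exact (Hd l Hl (HXY l HX)).
Qed.

Lemma eventually_disjoint_sub_rho (F : Om -> Prop) (X Y : Lam -> Prop) :
  Fam F -> (forall l, rho F l -> X l -> Y l) ->
  eventually_disjoint F Y -> eventually_disjoint F X.
Proof.
  intros HF HXY [K [HK Hd]]. exists K. split; auto.
  intros l Hl HX. apply (Hd l Hl), HXY, HX. exact (rho_tail_sub_rho F K HF HK l Hl).
Qed.

Lemma eventually_disjoint_of_disjoint (F : Om -> Prop) (X : Lam -> Prop) :
  Fam F -> disjoint (rho F) X -> eventually_disjoint F X.
Proof.
  intros HF Hd. exists (fun _ => False). split; [exact finite_empty|].
  intros l Hl. apply Hd, (rho_tail_sub_rho F _ HF finite_empty l Hl).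
Qed.

Lemma eventually_disjoint_union (F : Om -> Prop) (X Y : Lam -> Prop) :
  Fam F -> eventually_disjoint F X -> eventually_disjoint F Y ->
  eventually_disjoint F (fun l => X l \/ Y l).
Proof.
  intros HF [K1 [HK1 H1]] [K2 [HK2 H2]].
  pose proof (finite_union K1 K2 HK1 HK2) as HK.
  exists (fun o => K1 o \/ K2 o). split; [exact HK|]. intros l Hl [HX|HY].
  - apply (H1 l); auto.
    apply (rho_tail_sub F F K1 _ HF HF (fun o h => h) HK1 HK (fun o h => or_introl h)), Hl.
  - apply (H2 l); auto.
    apply (rho_tail_sub F F K2 _ HF HF (fun o h => h) HK2 HK (fun o h => or_intror h)), Hl.
Qed.

Lemma eventually_disjoint_bigunion (F : Om -> Prop) (R : nat -> Lam -> Prop) (n : nat) :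
  Fam F -> (forall i, i < n -> eventually_disjoint F (R i)) ->
  eventually_disjoint F (fun l => exists i, i < n /\ R i l).
Proof.
  intros HF. apply (finite_union_closed (eventually_disjoint F)).
  - apply eventually_disjoint_of_disjoint; auto. intros l _ [].
  - apply eventually_disjoint_sub.
  - intros X Y. apply eventually_disjoint_union, HF.
Qed.

Lemma eventually_disjoint_refine (G F : Om -> Prop) (X : Lam -> Prop) :
  tails_refine G F -> eventually_disjoint F X -> eventually_disjoint G X.
Proof.
  intros Href [K [HK Hd]]. destruct (Href K HK) as [L [HL HLK]].
  exists L. split; auto. intros l Hl. apply Hd, HLK, Hl.
Qed.

Lemma tails_refine_sub (G F : Om -> Prop) : Fam G -> Fam F -> subset G F -> tails_refine G F.
Proof.
  intros HG HF HGF K HK. exists K. split; auto.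
  apply rho_tail_sub; auto. intros o h. exact h.
Qed.

Lemma not_eventually_disjoint (F : Om -> Prop) (X : Lam -> Prop) :
  ~ eventually_disjoint F X -> forall K, finite K -> exists l, rho (setminus F K) l /\ X l.
Proof.
  intros HnED K HK. apply NNPP. intro Hno. apply HnED. exists K. split; auto.
  intros l Hl HX. apply Hno. eauto.
Qed.

Lemma exists_tail_separating (E : Om -> Prop) :
  Fam E -> exists F, Fam F /\ subset F E /\ forall X, finite X -> eventually_disjoint F X.
Proof.
  intros HE. destruct (rho_points_leave E HE) as [F [HF [HFE Hpt]]].
  exists F. split; [exact HF|split; [exact HFE|]].
  intros X [l Hl]. apply (eventually_disjoint_sub _ _ (fun a => In a l)); [exact Hl|].
  clear Hl. induction l as [|a l IH].
  - apply eventually_disjoint_of_disjoint; auto. intros b _ [].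
  - apply (eventually_disjoint_sub _ _ (fun b => b = a \/ In b l)).
    { intros b [<-|Hb]; auto. }
    apply eventually_disjoint_union; auto.
    destruct (classic (rho F a)) as [Ha|Ha].
    + destruct (Hpt a Ha) as [K [HK HnK]]. exists K. split; auto. intros b Hb ->. auto.
    + apply eventually_disjoint_of_disjoint; auto. intros b Hb ->. auto.
Qed.

Lemma I_rho_sub (X Y : Lam -> Prop) : subset X Y -> I_rho Fam rho Y -> I_rho Fam rho X.
Proof. intros HXY HY F HF HFX. apply (HY F HF). intros l Hl. apply HXY, HFX, Hl. Qed.

Lemma I_rho_union (X Y : Lam -> Prop) :
  I_rho Fam rho X -> I_rho Fam rho Y -> I_rho Fam rho (fun l => X l \/ Y l).
Proof.
  intros HX HY F HF HFXY.
  destruct (rho_split F (fun l => rho F l /\ X l) (fun l => rho F l /\ Y l) HF)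
    as [E [HE [HEX|HEY]]].
  - intro l. split; [intro Hl; destruct (HFXY l Hl); auto|tauto].
  - apply (HX E HE). intros l Hl. apply HEX, Hl.
  - apply (HY E HE). intros l Hl. apply HEY, Hl.
Qed.

Lemma I_rho_bigunion (R : nat -> Lam -> Prop) (n : nat) :
  (forall i, i < n -> I_rho Fam rho (R i)) ->
  I_rho Fam rho (fun l => exists i, i < n /\ R i l).
Proof.
  apply (finite_union_closed (I_rho Fam rho)).
  - intros F HF HF0. apply (rho_infinite F HF). exists []. intros l Hl. exact (HF0 l Hl).
  - apply I_rho_sub.
  - apply I_rho_union.
Qed.

Lemma not_I_rho (X : Lam -> Prop) : ~ I_rho Fam rho X -> exists F, Fam F /\ subset (rho F) X.
Proof.
  intro HnI. apply not_all_ex_not in HnI as [F HF].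
  apply imply_to_and in HF as [HF HFX]. apply NNPP in HFX. eauto.
Qed.

Definition rho_converges {X : Type} (nbhd : X -> (X -> Prop) -> Prop)
  (f : Lam -> X) (F : Om -> Prop) (x : X) : Prop :=
  forall U, nbhd x U -> exists K, finite K /\ subset (image f (rho (setminus F K))) U.

Lemma rho_converges_iff {X : Type} (nbhd : X -> (X -> Prop) -> Prop)
  (f : Lam -> X) (F : Om -> Prop) (x : X) :
  rho_converges nbhd f F x <->
  forall U, nbhd x U -> eventually_disjoint F (fun l => ~ U (f l)).
Proof.
  split; intros H U HU; destruct (H U HU) as [K [HK Hs]]; exists K; split; auto.
  - intros l Hl HnU. apply HnU, Hs. exists l. auto.
  - intros y [l [Hl <-]]. apply NNPP. exact (Hs l Hl).
Qed.

Lemma katetov_transfer {B : Type} (f : Lam -> B) (F : Om -> Prop) (F2 Y : B -> Prop) :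
  (forall K1, finite K1 -> almost_subset F2 (image f (rho (setminus F K1)))) ->
  eventually_disjoint F (fun l => Y (f l)) -> finite (fun p => F2 p /\ Y p).
Proof.
  intros Hkat [K1 [HK1 Hd]]. destruct (Hkat K1 HK1) as [K2 [HK2 Hsub]].
  apply (finite_sub _ K2); auto. intros p [HF2 HY]. apply NNPP. intro HnK.
  destruct (Hsub p (conj HF2 HnK)) as [l [Hl <-]]. exact (Hd l Hl HY).
Qed.

Lemma not_P2minus_of_katetov_BI : rho_BI_le_K Fam rho -> ~ P2minus Fam rho.
Proof.
  intros [f Hf] HP.
  set (A i j l := fst (f l) = i /\ fst (snd (f l)) = j).
  assert (HA : forall i j, I_rho Fam rho (A i j)).
  { intros i j F HF HFA. destruct (Hf F HF) as [F2 [HF2 Hkat]]. apply HF2.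
    apply (BI_of_bounds _ (S i) (S j)).
    - intros i' j' _ Hj'. apply (katetov_transfer f F F2 _ Hkat).
      apply eventually_disjoint_of_disjoint; auto.
      intros l Hl [_ Hl']. destruct (HFA l Hl). lia.
    - intros i' Hi'. apply (katetov_transfer f F F2 _ Hkat).
      apply eventually_disjoint_of_disjoint; auto.
      intros l Hl Hl'. destruct (HFA l Hl). lia. }
  destruct (HP A) as [F [HF [Hcol [i0 Hrow]]]]; auto.
  - intro l. now exists (fst (f l)), (fst (snd (f l))).
  - intros i j i' j' Hne l [Hi Hj] [Hi' Hj']. apply Hne. congruence.
  - destruct (Hf F HF) as [F2 [HF2 Hkat]]. apply HF2.
    apply (BI_of_bounds _ (S i0) 0).
    + intros i j _ _. apply (katetov_transfer f F F2 _ Hkat), Hcol.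
    + intros i Hi. apply (katetov_transfer f F F2 _ Hkat).
      apply (eventually_disjoint_sub _ _ (fun l => exists j, A i j l)); [|apply Hrow; lia].
      intros l Hl. exists (fst (snd (f l))). split; [exact Hl|reflexivity].
Qed.

Lemma diagonal_set (F : Om -> Prop) (S : nat -> Lam -> Prop) :
  Fam F -> (forall X, finite X -> eventually_disjoint F X) ->
  (forall m, ~ eventually_disjoint F (S m)) ->
  exists D, (forall m, infinite (fun l => D l /\ S m l)) /\
    (forall K, finite K -> almost_subset D (rho (setminus F K))).
Proof.
  intros HF Hfin HS.
  destruct Om_countable as [e [_ He]].
  set (E n := image e (fun k => k < n)).
  assert (HE : forall n, finite (E n)) by (intro n; apply finite_image, finite_nat_lt).
  assert (HEmono : forall n m, n <= m -> subset (E n) (E m)).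
  { intros n m Hnm o [k [Hk <-]]. exists k. split; [lia|reflexivity]. }
  destruct (choice (fun p l => rho (setminus F (E (fst p + snd p))) l /\ S (fst p) l))
    as [d Hd].
  { intros [m n]. apply (not_eventually_disjoint _ _ (HS m)), HE. }
  exists (image d (fun _ => True)). split.
  - intros m HDm. destruct (Hfin _ HDm) as [K [HK Hdisj]].
    destruct (finite_sub_enum_prefix e He K HK) as [N HN].
    apply (Hdisj (d (m, N))).
    + apply (rho_tail_sub F F K (E (m + N)) HF HF (fun o h => h) HK (HE _)).
      * intros o Ho. apply (HEmono N); [lia|apply HN, Ho].
      * apply (Hd (m, N)).
    + split; [exists (m, N); auto|apply (Hd (m, N))].
  - intros K HK. destruct (finite_sub_enum_prefix e He K HK) as [N HN].
    exists (image d (fun p => fst p < N /\ snd p < N)).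
    split; [apply finite_image, finite_pairs_lt|].
    intros l [[[m n] [_ <-]] Hn].
    assert (HmnN : N <= m + n).
    { apply Nat.nlt_ge. intro Hlt. apply Hn. exists (m, n). simpl. split; [lia|reflexivity]. }
    apply (rho_tail_sub F F K (E (m + n)) HF HF (fun o h => h) HK (HE _)).
    + intros o Ho. apply (HEmono N); [exact HmnN|apply HN, Ho].
    + apply (Hd (m, n)).
Qed.

Lemma P2minus_witness_of_bounds (A : nat -> nat -> Lam -> Prop) (F : Om -> Prop) (N M : nat) :
  (forall X, I_rho Fam rho X -> exists G, Fam G /\
     subset (rho G) (setminus (rho F) X) /\ tails_refine G F) ->
  (forall i j, I_rho Fam rho (A i j)) ->
  (forall i j, i < N -> M <= j -> eventually_disjoint F (A i j)) ->
  (forall i, N <= i -> eventually_disjoint F (fun l => exists j, A i j l)) ->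
  exists G, Fam G /\ (forall i j, eventually_disjoint G (A i j)) /\
    exists i0, forall i, i0 < i -> eventually_disjoint G (fun l => exists j, A i j l).
Proof.
  intros HS1 HA Hcol Hrow.
  destruct (HS1 (fun l => exists i, i < N /\ exists j, j < M /\ A i j l))
    as [G [HG [HGF Href]]].
  { apply I_rho_bigunion. intros i _. apply I_rho_bigunion. auto. }
  exists G. split; [exact HG|split].
  - intros i j. destruct (Nat.lt_ge_cases i N) as [Hi|Hi].
    + destruct (Nat.lt_ge_cases j M) as [Hj|Hj].
      * apply eventually_disjoint_of_disjoint; auto. intros l Hl HAl.
        apply (proj2 (HGF l Hl)). exists i. split; auto. exists j. auto.
      * apply (eventually_disjoint_refine G F); auto.
    + apply (eventually_disjoint_refine G F); auto.
      apply (eventually_disjoint_sub _ _ (fun l => exists j, A i j l)); auto.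
      intros l Hl. exists j. exact Hl.
  - exists N. intros i Hi. apply (eventually_disjoint_refine G F); auto. apply Hrow. lia.
Qed.

Lemma rows_or_columns_meet_tails (A : nat -> nat -> Lam -> Prop) (F : Om -> Prop) :
  (forall X, I_rho Fam rho X -> exists G, Fam G /\
     subset (rho G) (setminus (rho F) X) /\ tails_refine G F) ->
  (forall i j, I_rho Fam rho (A i j)) ->
  ~ (exists G, Fam G /\ (forall i j, eventually_disjoint G (A i j)) /\
       exists i0, forall i, i0 < i -> eventually_disjoint G (fun l => exists j, A i j l)) ->
  (forall n, exists i, n <= i /\ ~ eventually_disjoint F (fun l => exists j, A i j l)) \/
  (exists i, forall n, exists j, n <= j /\ ~ eventually_disjoint F (A i j)).
Proof.
  intros HS1 HA Hno. apply NNPP. intro Hneither.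
  apply not_or_and in Hneither as [Hrows Hcols].
  destruct (not_unbounded _ Hrows) as [N HN].
  destruct (uniform_bound (fun i j => eventually_disjoint F (A i j)) N) as [M HM].
  { intro i. apply not_unbounded. intro Hi. apply Hcols. eauto. }
  apply Hno, (P2minus_witness_of_bounds A F N M); auto.
Qed.

Lemma katetov_BI_of_not_P2minus : S1 Fam rho -> ~ P2minus Fam rho -> rho_BI_le_K Fam rho.
Proof.
  intros HS1 HnP.
  apply not_all_ex_not in HnP as [A HnP].
  apply imply_to_and in HnP as [Hcov HnP].
  apply imply_to_and in HnP as [Hdisj HnP].
  apply imply_to_and in HnP as [HA HnoWitness].
  destruct (partition_coding A Lam_countable Hcov Hdisj) as [f [h [Hfh Hf_col]]].
  exists f. intros F1 HF1.
  destruct (exists_tail_separating F1 HF1) as [F' [HF' [HF'F1 Hfin']]].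
  destruct (HS1 F' HF') as [F [HF [HFF' HS1F]]].
  assert (Hfin : forall X, finite X -> eventually_disjoint F X).
  { intros X HX. apply (eventually_disjoint_refine F F'), Hfin', HX.
    apply tails_refine_sub; auto. }
  assert (Hseq : exists S : nat -> Lam -> Prop, (forall m, ~ eventually_disjoint F (S m)) /\
            forall D, (forall m, infinite (fun l => D l /\ S m l)) -> ~ BI (image f D)).
  { destruct (rows_or_columns_meet_tails A F HS1F HA HnoWitness) as [Hrows|[i Hcols]].
    - destruct (choice _ Hrows) as [g Hg].
      exists (fun m l => exists j, A (g m) j l). split; [intro m; apply Hg|].
      intros D HD. apply not_BI_of_rows. intro n. exists (g n). split; [apply Hg|].
      apply (infinite_image_inter f h D (fun l => exists j, A (g n) j l)); [exact Hfh| |apply HD].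
      intros l [j Hl]. apply (Hf_col l _ _ Hl).
    - destruct (choice _ Hcols) as [g Hg].
      exists (fun m => A i (g m)). split; [intro m; apply Hg|].
      intros D HD. apply (not_BI_of_columns _ i). intro n. exists (g n). split; [apply Hg|].
      apply (infinite_image_inter f h D (A i (g n))); [exact Hfh| |apply HD].
      intros l Hl. apply (Hf_col l _ _ Hl). }
  destruct Hseq as [S [HS HSBI]].
  destruct (diagonal_set F S HF Hfin HS) as [D [HDinf HDsub]].
  exists (image f D). split; [exact (HSBI D HDinf)|].
  intros K1 HK1. apply almost_subset_image, (almost_subset_weaken _ _ _ (HDsub K1 HK1)).
  apply (rho_tail_sub F F1 K1 K1 HF HF1 (fun o Ho => HF'F1 o (HFF' o Ho)) HK1 HK1).
  intros o Ho. exact Ho.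
Qed.

Lemma P2minus_of_FinBW : FinBW ord_nbhd Fam rho -> P2minus Fam rho.
Proof.
  intros HBW A Hcov Hdisj HA.
  destruct (partition_index A Hcov Hdisj) as [idx Hidx].
  set (f l := Some (fst (idx l), S (snd (idx l))) : ord_w2_1).
  assert (Hf : forall l i j, f l = Some (i, S j) <-> A i j l).
  { intros l i j. rewrite Hidx. unfold f. destruct (idx l) as [a b]. simpl.
    split; intros E; inversion E; reflexivity. }
  destruct (HBW f) as [F [HF [x Hx]]].
  pose proof (proj1 (rho_converges_iff ord_nbhd f F x) Hx) as Hlim.
  destruct (classic (exists i j, x = Some (i, S j))) as [[i [j ->]]|Hx_limit].
  - exfalso. destruct (Hlim _ (ord_nbhd_isolated i j)) as [K [HK Hd]].
    apply (HA i j (setminus F K) (Fam_setminus F K HF HK)).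
    intros l Hl. apply Hf, NNPP. exact (Hd l Hl).
  - exists F. split; [exact HF|split].
    + intros i j. apply (eventually_disjoint_sub _ _ (fun l => ~ f l <> Some (i, S j))).
      { intros l Hl Hne. apply Hne, Hf, Hl. }
      apply (Hlim (fun z => z <> Some (i, S j))), ord_nbhd_neq. intros ->. eauto.
    + exists (match x with Some (i, _) => i | None => 0 end). intros i Hi.
      apply (eventually_disjoint_sub _ _ (fun l => ~ forall j, f l <> Some (i, j))).
      { intros l [j Hl] Hne. apply (Hne (S j)), Hf, Hl. }
      apply (Hlim (fun z => forall j, z <> Some (i, j))), ord_nbhd_avoid_row; [intro j|];
        destruct x as [[a b]|]; simpl in Hi; try discriminate; intros [= E1 E2]; lia.
Qed.

Lemma rho_converges_const (f : Lam -> ord_w2_1) (F : Om -> Prop) (x : ord_w2_1) :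
  Fam F -> (forall l, rho F l -> f l = x) -> rho_converges ord_nbhd f F x.
Proof.
  intros HF Hx. apply rho_converges_iff. intros U HU.
  apply eventually_disjoint_of_disjoint; auto. intros l Hl HnU.
  apply HnU. rewrite (Hx l Hl). apply ord_nbhd_self, HU.
Qed.

Lemma rho_converges_limit_row (f : Lam -> ord_w2_1) (G : Om -> Prop) (i : nat) :
  Fam G -> (forall l, rho G l -> exists j, f l = Some (i, j)) ->
  (forall j, eventually_disjoint G (fun l => f l = Some (i, j))) ->
  rho_converges ord_nbhd f G (Some (S i, 0)).
Proof.
  intros HG Hrow Hfib. apply rho_converges_iff. intros U HU.
  destruct (ord_nbhd_limit_row i U HU) as [M HM].
  apply (eventually_disjoint_sub_rho G _ (fun l => exists j, j < M /\ f l = Some (i, j))); auto.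
  - intros l Hl HnU. destruct (Hrow l Hl) as [j Hj]. exists j. split; auto.
    apply Nat.nle_gt. intro HMj. apply HnU. rewrite Hj. apply HM, HMj.
  - apply eventually_disjoint_bigunion; auto.
Qed.

Lemma rho_converges_top (f : Lam -> ord_w2_1) (G : Om -> Prop) (i0 : nat) :
  Fam G -> (forall l, rho G l -> f l = None \/ exists i j, i0 < i /\ f l = Some (i, j)) ->
  (forall i, i0 < i -> eventually_disjoint G (fun l => exists j, f l = Some (i, j))) ->
  rho_converges ord_nbhd f G None.
Proof.
  intros HG Htop Hrow. apply rho_converges_iff. intros U HU.
  destruct (ord_nbhd_top U HU) as [N HN].
  apply (eventually_disjoint_sub_rho G _
           (fun l => exists i, i < S N /\ (i0 < i /\ exists j, f l = Some (i, j)))); auto.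
  - intros l Hl HnU. destruct (Htop l Hl) as [E|[i [j [Hi E]]]]; rewrite E in HnU.
    + destruct (HnU (ord_nbhd_self _ _ HU)).
    + exists i. split; [|split; eauto]. apply Nat.nle_gt. intro HiN. apply HnU, HN. lia.
  - apply eventually_disjoint_bigunion; auto. intros i _.
    destruct (Nat.lt_ge_cases i0 i) as [Hi|Hi].
    + apply (eventually_disjoint_sub _ _ (fun l => exists j, f l = Some (i, j))), Hrow, Hi.
      intros l [_ Hl]. exact Hl.
    + apply eventually_disjoint_of_disjoint; auto. intros l _ [Hi' _]. lia.
Qed.

Lemma P2minus_fibres (f : Lam -> ord_w2_1) :
  P2minus Fam rho -> (forall i j, I_rho Fam rho (fun l => f l = ord_of_pair i j)) ->
  exists F i0, Fam F /\ (forall i j, eventually_disjoint F (fun l => f l = Some (i, j))) /\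
    forall i, i0 < i -> eventually_disjoint F (fun l => exists j, f l = Some (i, j)).
Proof.
  intros HP HA.
  destruct (HP (fun i j l => f l = ord_of_pair i j)) as [F [HF [Hfib [i0 Hrow]]]]; auto.
  - intro l. destruct (ord_of_pair_surj (f l)) as [i [j E]]. exists i, j. congruence.
  - intros i j i' j' Hne l H1 H2. apply Hne, ord_of_pair_inj. congruence.
  - exists F, i0. split; [exact HF|split].
    + intros i j. destruct (ord_of_pair_surj (Some (i, j))) as [p [q E]].
      apply (eventually_disjoint_sub _ _ _ (fun l Hl => eq_trans Hl (eq_sym E)) (Hfib p q)).
    + intros i Hi. apply (eventually_disjoint_sub _ _ (fun l => exists j, f l = ord_of_pair i j)).
      * intros l [j Hl]. exists j. rewrite ord_of_pair_pos by lia. exact Hl.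
      * apply Hrow, Hi.
Qed.

Lemma FinBW_of_P2minus : S2 Fam rho -> P2minus Fam rho -> FinBW ord_nbhd Fam rho.
Proof.
  intros HS2 HP f.
  destruct (classic (forall i j, I_rho Fam rho (fun l => f l = ord_of_pair i j))) as [HA|HnA].
  2: { apply not_all_ex_not in HnA as [i HnA]. apply not_all_ex_not in HnA as [j HnA].
       destruct (not_I_rho _ HnA) as [F [HF HFA]].
       exists F. split; [exact HF|]. exists (ord_of_pair i j). apply rho_converges_const; auto. }
  destruct (P2minus_fibres f HP HA) as [F0 [i0 [HF0 [Hfib0 Hrow0]]]].
  destruct (HS2 F0 HF0) as [F [HF [HFF0 HS2F]]].
  assert (Href0 : tails_refine F F0) by (apply tails_refine_sub; auto).
  set (P i l := rho F l /\ exists j, f l = Some (i, j)).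
  set (Q l := rho F l /\ (f l = None \/ exists i j, i0 < i /\ f l = Some (i, j))).
  destruct (classic (exists i, i < S i0 /\ ~ I_rho Fam rho (P i))) as [[i [_ HPi]]|HP_I].
  - destruct (HS2F (P i) (fun l H => proj1 H) HPi) as [G [HG [HGP HGF]]].
    exists G. split; [exact HG|]. exists (Some (S i, 0)).
    apply rho_converges_limit_row; auto.
    + intros l Hl. exact (proj2 (HGP l Hl)).
    + intro j. apply (eventually_disjoint_refine G F), (eventually_disjoint_refine F F0); auto.
  - assert (HQ : ~ I_rho Fam rho Q).
    { intro HQ.
      assert (HPs : I_rho Fam rho (fun l => exists i, i < S i0 /\ P i l)).
      { apply I_rho_bigunion. intros i Hi. apply NNPP. intro HnI. apply HP_I. exists i. auto. }
      apply (I_rho_union _ _ HPs HQ F HF). intros l Hl. destruct (f l) as [[i j]|] eqn:E.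
      - destruct (Nat.lt_ge_cases i0 i) as [Hi|Hi].
        + right. split; auto. right. exists i, j. auto.
        + left. exists i. split; [lia|]. split; [exact Hl|]. exists j. exact E.
      - right. split; auto. }
    destruct (HS2F Q (fun l H => proj1 H) HQ) as [G [HG [HGQ HGF]]].
    exists G. split; [exact HG|]. exists None.
    apply (rho_converges_top f G i0); auto.
    + intros l Hl. exact (proj2 (HGQ l Hl)).
    + intros i Hi. apply (eventually_disjoint_refine G F), (eventually_disjoint_refine F F0); auto.
Qed.

End PartitionRegular.

Theorem theorem4p2 (Lam Om : Type) (Fam : (Om -> Prop) -> Prop)
  (rho : (Om -> Prop) -> (Lam -> Prop)) :
  partition_regular Fam rho ->
  ((rho_BI_le_K Fam rho -> ~ P2minus Fam rho) /\
   (S1 Fam rho -> (rho_BI_le_K Fam rho <-> ~ P2minus Fam rho))) /\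
  ((FinBW ord_nbhd Fam rho -> P2minus Fam rho) /\
   (S2 Fam rho -> (P2minus Fam rho <-> FinBW ord_nbhd Fam rho))).
Proof.
  intros (HLam & HOm & _ & _ & Hsetminus & Hinf & Hmono & Hsplit & Hpoints).
  assert (H1 : rho_BI_le_K Fam rho -> ~ P2minus Fam rho)
    by (apply not_P2minus_of_katetov_BI; assumption).
  assert (H2 : FinBW ord_nbhd Fam rho -> P2minus Fam rho)
    by (apply P2minus_of_FinBW; assumption).
  split; split; auto.
  - intro HS1. split; [exact H1|]. apply katetov_BI_of_not_P2minus; assumption.
  - intro HS2. split; [|exact H2]. apply FinBW_of_P2minus; assumption.
Qed.
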